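(* Let $U$ be a nonzero subspace of $\mathbb{F}_q^n$ and let $u$ be the minimum element of $U\setminus\{0\}$ with respect to the total order $\prec$ on $\mathbb{F}_q^n$. Then $u$ is the last row of the reduced row echelon form of a generator matrix of $U$.
   Context: Fix a total order $\prec$ on $\mathbb{F}_q$ such that $0\prec1\prec\alpha$ for all $\alpha\in\mathbb{F}_q\setminus\{0,1\}$, and extend it lexicographically to a total order $\prec$ on $\mathbb{F}_q^n$. The reduced row echelon form of a $k$-dimensional subspace is its unique $k\times n$ generator matrix in reduced row echelon form (the leading nonzero positions of the rows increase from top to bottom). *)

From HB Require Import structures.
From mathcomp Require Import all_boot all_order all_algebra all_field.
Set Implicit Arguments. Unset Strict Implicit. Unset Printing Implicit Defensive.
Import GRing.Theory.
Local Open Scope ring_scope.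

Definition strict_total_order (F : eqType) (lt : rel F) : Prop :=
  [/\ (forall a, ~~ lt a a),
      (forall a b c, lt a b -> lt b c -> lt a c)
    & (forall a b, a != b -> lt a b || lt b a)].

Definition admissible_order (F : finFieldType) (lt : rel F) : Prop :=
  [/\ strict_total_order lt, lt 0 1
    & (forall a : F, a != 0 -> a != 1 -> lt 1 a)].

Definition lex_lt (F : finFieldType) (lt : rel F) (n : nat)
    (x y : 'rV[F]_n) : bool :=
  [exists i : 'I_n,
     [forall j : 'I_n, (j < i)%N ==> (x 0 j == y 0 j)] && lt (x 0 i) (y 0 i)].

Definition is_rref (F : fieldType) (k n : nat) (R : 'M[F]_(k, n)) : Prop :=
  exists lead : 'I_k -> 'I_n,
    [/\ (forall (i : 'I_k) (j : 'I_n), (j < lead i)%N -> R i j = 0),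
        (forall i : 'I_k, R i (lead i) = 1),
        (forall i i' : 'I_k, (i < i')%N -> (lead i < lead i')%N)
      & (forall i i' : 'I_k, i != i' -> R i' (lead i) = 0)].

From mathcomp Require Import all_boot all_order all_algebra all_field.
Set Implicit Arguments. Unset Strict Implicit. Unset Printing Implicit Defensive.
Import GRing.Theory.
Local Open Scope ring_scope.

(** Every vector of the row space of a matrix R in reduced row echelon form
    is the combination of the rows of R whose coefficients are its entries at
    the pivot columns.  For a nonzero u, let i be the first row with
    [u (lead i) != 0]; then u vanishes before [lead i], and so does the last
    row r of R.  At [lead i], r has entry 0 if i is not the last row and
    entry 1 otherwise (in which case u is a scalar multiple c r with c <> 1).
    Since 0 and 1 are the two smallest elements of F_q, r precedes u, so r is
    the lexicographically least nonzero vector of the row space. *)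

Section LexOrder.

Variables (F : finFieldType) (lt : rel F) (n : nat).

Lemma lex_ltI (x y : 'rV[F]_n) (a : 'I_n) :
  (forall j : 'I_n, (j < a)%N -> x 0 j = y 0 j) -> lt (x 0 a) (y 0 a) ->
  lex_lt lt x y.
Proof.
move=> eq_pre lt_a; apply/existsP; exists a; rewrite lt_a andbT.
by apply/forallP => j; apply/implyP => /eq_pre ->.
Qed.

Lemma lex_lt_asym (x y : 'rV[F]_n) :
  strict_total_order lt -> lex_lt lt x y -> ~~ lex_lt lt y x.
Proof.
move=> [irr trans _] /existsP[i /andP[/forallP eq_i lt_i]].
apply/negP => /existsP[i' /andP[/forallP eq_i' lt_i']].
case: (ltngtP i i') => [ii'|i'i|/val_inj ii'].
- by move: lt_i; rewrite (eqP (implyP (eq_i' i) ii')) (negbTE (irr _)).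
- by move: lt_i'; rewrite (eqP (implyP (eq_i i') i'i)) (negbTE (irr _)).
- by move: lt_i'; rewrite -ii' => /(trans _ _ _ lt_i); rewrite (negbTE (irr _)).
Qed.

Lemma admissible_gt0 (a : F) : admissible_order lt -> a != 0 -> lt 0 a.
Proof.
move=> [[_ trans _] lt01 lt1a] a0.
by case: (eqVneq a 1) => [-> // | a1]; apply: trans lt01 (lt1a _ a0 a1).
Qed.

End LexOrder.

Section RowEchelon.

Variables (F : fieldType) (k n : nat) (R : 'M[F]_(k, n)) (lead : 'I_k -> 'I_n).
Hypotheses
  (lead_zero : forall (i : 'I_k) (j : 'I_n), (j < lead i)%N -> R i j = 0)
  (lead_one : forall i : 'I_k, R i (lead i) = 1)
  (lead_mono : forall i i' : 'I_k, (i < i')%N -> (lead i < lead i')%N)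
  (pivot_col : forall i i' : 'I_k, i != i' -> R i' (lead i) = 0).

Lemma rref_lead_leq (i i' : 'I_k) : (i <= i')%N -> (lead i <= lead i')%N.
Proof. by rewrite leq_eqVlt => /predU1P[/val_inj -> // | /lead_mono/ltnW]. Qed.

Lemma rref_coefE (w : 'rV[F]_k) (i : 'I_k) : (w *m R) 0 (lead i) = w 0 i.
Proof.
rewrite mxE (bigD1 i) //= lead_one mulr1 big1 ?addr0 // => l li.
by rewrite pivot_col ?mulr0 // eq_sym.
Qed.

Lemma rref_rowspace_decomp (u : 'rV[F]_n) :
  (u <= R)%MS -> u = \sum_i u 0 (lead i) *: row i R.
Proof.
case/submxP=> w ->; rewrite {1}mulmx_sum_row.
by apply: eq_bigr => i _; rewrite rref_coefE.
Qed.

Lemma rref_rowspace_lead_zero (u : 'rV[F]_n) (i0 : 'I_k) :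
  (u <= R)%MS -> (forall i : 'I_k, (i < i0)%N -> u 0 (lead i) = 0) ->
  forall j : 'I_n, (j < lead i0)%N -> u 0 j = 0.
Proof.
move=> uR u_pre j j_lt; rewrite (rref_rowspace_decomp uR) summxE big1 // => i _.
rewrite !mxE; case: (ltnP i i0) => [/u_pre -> | i0i]; first by rewrite mul0r.
by rewrite lead_zero ?mulr0 // (leq_trans j_lt (rref_lead_leq i0i)).
Qed.

Lemma rref_rowspace_scale_row (u : 'rV[F]_n) (i : 'I_k) :
  (u <= R)%MS -> (forall i' : 'I_k, i' != i -> u 0 (lead i') = 0) ->
  u = u 0 (lead i) *: row i R.
Proof.
move=> uR u_other; rewrite {1}(rref_rowspace_decomp uR) (bigD1 i) //=.
by rewrite big1 ?addr0 // => i' /u_other ->; rewrite scale0r.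
Qed.

Lemma rref_row_neq0 (i : 'I_k) : row i R != 0.
Proof. by apply/rV0Pn; exists (lead i); rewrite mxE lead_one oner_neq0. Qed.

End RowEchelon.

Lemma rref_last_row_lex_min (F : finFieldType) (lt : rel F) (n k : nat)
    (R : 'M[F]_(k.+1, n)) (u : 'rV[F]_n) :
  admissible_order lt -> is_rref R ->
  (u <= R)%MS -> u != 0 -> u != row ord_max R -> lex_lt lt (row ord_max R) u.
Proof.
move=> lt_adm [lead [lead_zero lead_one lead_mono pivot_col]] uR u0 u_r.
have [i1 ui1] : exists i, u 0 (lead i) != 0.
  apply/existsP; apply: contra_neqT u0; rewrite negb_exists => /forallP u_piv.
  rewrite (rref_rowspace_decomp lead_one pivot_col uR) big1 // => i _.
  by move/negPn/eqP: (u_piv i) => ->; rewrite scale0r.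
case: (@arg_minnP _ i1 (fun i => u 0 (lead i) != 0) val ui1) => i0 ui0 i0_min.
have u_pre (i : 'I_k.+1) : (i < i0)%N -> u 0 (lead i) = 0.
  by move=> ii0; apply/eqP; apply: contraLR ii0 => /i0_min; rewrite -leqNgt.
apply: (lex_ltI (a := lead i0)).
  move=> j j_lt; rewrite (rref_rowspace_lead_zero lead_zero lead_one lead_mono
    pivot_col uR u_pre j_lt) mxE lead_zero //.
  by apply: leq_trans j_lt _; apply: (rref_lead_leq lead_mono); exact: leq_ord.
case: (eqVneq i0 ord_max) => [i0_max | i0_nmax]; last first.
  by rewrite mxE pivot_col // admissible_gt0.
subst i0.
have u_scaled : u = u 0 (lead ord_max) *: row ord_max R.
  apply: (rref_rowspace_scale_row lead_one pivot_col uR) => i i_max.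
  by rewrite u_pre // ltn_neqAle val_eqE i_max leq_ord.
have [_ _ lt1a] := lt_adm.
rewrite mxE lead_one lt1a //.
by apply: contra_neq u_r => c1; rewrite {1}u_scaled c1 scale1r.
Qed.

Theorem lemma5p3 (F : finFieldType) (lt : rel F) (n m : nat)
    (A : 'M[F]_(m, n)) (u : 'rV[F]_n) :
  admissible_order lt ->
  A != 0 ->
  (u <= A)%MS -> u != 0 ->
  (forall v : 'rV[F]_n, (v <= A)%MS -> v != 0 -> v != u -> lex_lt lt u v) ->
  forall (k : nat) (R : 'M[F]_(k.+1, n)),
    is_rref R -> (R == A)%MS -> row ord_max R = u.
Proof.
move=> lt_adm _ uA u0 u_min k R R_rref /andP[RA AR].
have [lt_order _ _] := lt_adm.
have [lead [_ lead_one _ _]] := R_rref.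
have r0 := rref_row_neq0 lead_one ord_max.
have rA : (row ord_max R <= A)%MS := submx_trans (row_sub _ _) RA.
apply/eqP; apply: contraT => r_u.
have := lex_lt_asym lt_order (u_min _ rA r0 r_u).
by rewrite rref_last_row_lex_min // ?(submx_trans uA AR) // eq_sym.
Qed.
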